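(* Let $0<e_b<1/3$ and, for $a\in[e_b/2,e_b]$, consider the initial triple $(p_X,p_Y,p_Z)=(e_b-a,\;a,\;\tfrac32 e_b-a)$. Fix any finite sequence of B steps and P steps whose first step is a B step, let $(p_X',p_Y',p_Z')$ be the result of applying it, and let $R(a)=1-H_2(p_X'+p_Y')-H_2(p_Z'+p_Y')$. Then the minimum of $R(a)$ over $a\in[e_b/2,e_b]$ (the worst case) is attained at $a=e_b/2$.
   Context: $H_2(p)=-p\log_2 p-(1-p)\log_2(1-p)$. A B step maps $(p_X,p_Y,p_Z)$ to $p_X'=(p_X^2+p_Y^2)/p_S$, $p_Y'=2p_Xp_Y/p_S$, $p_Z'=2(1-p_X-p_Y-p_Z)p_Z/p_S$ with $p_S=1-2(p_X+p_Y)(1-p_X-p_Y)$. A P step maps $(p_X,p_Y,p_Z)$, with $p_I=1-p_X-p_Y-p_Z$, to $p_X'=3p_I^2(p_X+p_Y)+6p_Ip_Xp_Z+3p_X^2p_Y+p_X^3$, $p_Y'=6p_Ip_Yp_Z+3p_X(p_Y^2+p_Z^2)+3p_Yp_Z^2+p_Y^3$, $p_Z'=3p_I(p_Y^2+p_Z^2)+6p_Xp_Yp_Z+3p_Y^2p_Z+p_Z^3$. This is the single-photon SARG04 case, where $e_b$ is the bit error rate and $a$ the (unknown) $Y$-error rate. *)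

From Stdlib Require Import Reals List.
Open Scope R_scope.

(* log base 2; Stdlib's ln is total with ln x = 0 for x <= 0, so 0 * log2 0 = 0,
   matching the convention 0 log 0 = 0. *)
Definition log2 (x : R) : R := ln x / ln 2.

Definition H2 (p : R) : R := - p * log2 p - (1 - p) * log2 (1 - p).

Definition triple := (R * R * R)%type.

Definition B_step (t : triple) : triple :=
  let '(pX, pY, pZ) := t in
  let pS := 1 - 2 * (pX + pY) * (1 - pX - pY) in
  ((pX ^ 2 + pY ^ 2) / pS,
   2 * pX * pY / pS,
   2 * (1 - pX - pY - pZ) * pZ / pS).

Definition P_step (t : triple) : triple :=
  let '(pX, pY, pZ) := t in
  let pI := 1 - pX - pY - pZ in
  (3 * pI ^ 2 * (pX + pY) + 6 * pI * pX * pZ + 3 * pX ^ 2 * pY + pX ^ 3,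
   6 * pI * pY * pZ + 3 * pX * (pY ^ 2 + pZ ^ 2) + 3 * pY * pZ ^ 2 + pY ^ 3,
   3 * pI * (pY ^ 2 + pZ ^ 2) + 6 * pX * pY * pZ + 3 * pY ^ 2 * pZ + pZ ^ 3).

Inductive step := Bst | Pst.

Definition apply_step (s : step) (t : triple) : triple :=
  match s with Bst => B_step t | Pst => P_step t end.

Definition apply_steps (l : list step) (t : triple) : triple :=
  fold_left (fun acc s => apply_step s acc) l t.

Definition init_triple (eb a : R) : triple := (eb - a, a, 3 / 2 * eb - a).

Definition rate (l : list step) (eb a : R) : R :=
  let '(pX, pY, pZ) := apply_steps l (init_triple eb a) in
  1 - H2 (pX + pY) - H2 (pZ + pY).

From Stdlib Require Import Reals List Lra Psatz.
From Coquelicot Require Import Coquelicot.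
Open Scope R_scope.

(* In the correlation coordinates c_X = 1 - 2(p_Y + p_Z), c_Y = 1 - 2(p_X + p_Z),
   c_Z = 1 - 2(p_X + p_Y), a B step is
     (c_X, c_Y, c_Z) |-> ((c_X^2 + c_Y^2)/(1 + c_Z^2), 2 c_X c_Y/(1 + c_Z^2), 2 c_Z/(1 + c_Z^2))
   and a P step is
     (c_X, c_Y, c_Z) |-> ((3 c_X - c_X^3)/2, c_Y (3 c_Z^2 - c_Y^2)/2, c_Z^3),
   while R = 1 - H2((1 - c_Z)/2) - H2((1 - c_X)/2).  Initially c_X = 1 - 3 e_b and
   c_Z = 1 - 2 e_b do not depend on a, and c_Y = 1 - 5 e_b + 4 a increases with a.
   After the first B step the triple lies in the region 0 <= c_X <= 1,
   0 <= c_Y <= c_Z <= 1 (before it, c_Y may exceed c_Z); both steps preserve this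
   region, and on it c_Z' depends on c_Z only while c_X' and c_Y' are nondecreasing
   in (c_X, c_Y).  So the final c_Z does not depend on a and the final c_X is
   nondecreasing in a, and since H2 increases on [0, 1/2], R is least at a = e_b/2. *)

Lemma ln2_pos : 0 < ln 2.
Proof. rewrite <- ln_1. apply ln_increasing; lra. Qed.

Lemma xlnx_nonpos x : 0 <= x <= 1 -> x * ln x <= 0.
Proof.
  intros Hx. destruct (Req_dec x 0) as [-> | Hx0]; [lra |].
  assert (ln x <= 0) by (rewrite <- ln_1; apply ln_le; lra).
  nra.
Qed.

Lemma H2_0 : H2 0 = 0.
Proof. unfold H2, log2. rewrite Rminus_0_r, ln_1. field. apply Rgt_not_eq, ln2_pos. Qed.

Lemma H2_nonneg q : 0 <= q <= 1 -> 0 <= H2 q.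
Proof.
  intros Hq. pose proof ln2_pos.
  assert (Hq' : 0 <= 1 - q <= 1) by lra.
  pose proof (xlnx_nonpos q Hq). pose proof (xlnx_nonpos (1 - q) Hq').
  replace (H2 q) with (- (q * ln q + (1 - q) * ln (1 - q)) / ln 2)
    by (unfold H2, log2; field; lra).
  apply Rdiv_le_0_compat; lra.
Qed.

Lemma H2_derivative c :
  0 < c < 1 -> derivable_pt_lim H2 c ((ln (1 - c) - ln c) / ln 2).
Proof.
  intros Hc. pose proof ln2_pos. apply is_derive_Reals. unfold H2, log2.
  auto_derive; [repeat split; lra |].
  replace (1 + - c) with (1 - c) by ring. field. lra.
Qed.

Lemma H2_monotone p q : 0 <= p <= q -> q <= 1 / 2 -> H2 p <= H2 q.
Proof.
  intros Hpq Hq.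
  destruct (Req_dec p 0) as [-> | Hp0]; [rewrite H2_0; apply H2_nonneg; lra |].
  destruct (Req_dec p q) as [-> | Hpq']; [lra |].
  destruct (MVT_cor2 H2 (fun c => (ln (1 - c) - ln c) / ln 2) p q)
    as [c [Hmvt Hc]]; [lra | intros c Hc; apply H2_derivative; lra |].
  assert (ln c < ln (1 - c)) by (apply ln_increasing; lra).
  assert (0 <= (ln (1 - c) - ln c) / ln 2) by (apply Rdiv_le_0_compat; [lra | apply ln2_pos]).
  nra.
Qed.

Definition corrX (t : triple) : R := let '(pX, pY, pZ) := t in 1 - 2 * (pY + pZ).
Definition corrY (t : triple) : R := let '(pX, pY, pZ) := t in 1 - 2 * (pX + pZ).
Definition corrZ (t : triple) : R := let '(pX, pY, pZ) := t in 1 - 2 * (pX + pY).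

Lemma B_step_denominator_pos pX pY : 0 < 1 - 2 * (pX + pY) * (1 - pX - pY).
Proof. pose proof (pow2_ge_0 (pX + pY - 1 / 2)). nra. Qed.

Lemma corrX_B_step t : corrX (B_step t) = (corrX t ^ 2 + corrY t ^ 2) / (1 + corrZ t ^ 2).
Proof. destruct t as [[x y] z]; simpl. pose proof (B_step_denominator_pos x y). field. split; nra. Qed.
Lemma corrY_B_step t : corrY (B_step t) = 2 * corrX t * corrY t / (1 + corrZ t ^ 2).
Proof. destruct t as [[x y] z]; simpl. pose proof (B_step_denominator_pos x y). field. split; nra. Qed.
Lemma corrZ_B_step t : corrZ (B_step t) = 2 * corrZ t / (1 + corrZ t ^ 2).
Proof. destruct t as [[x y] z]; simpl. pose proof (B_step_denominator_pos x y). field. split; nra. Qed.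

Lemma corrX_P_step t : corrX (P_step t) = (3 * corrX t - corrX t ^ 3) / 2.
Proof. destruct t as [[x y] z]; simpl. field. Qed.
Lemma corrY_P_step t : corrY (P_step t) = corrY t * (3 * corrZ t ^ 2 - corrY t ^ 2) / 2.
Proof. destruct t as [[x y] z]; simpl. field. Qed.
Lemma corrZ_P_step t : corrZ (P_step t) = corrZ t ^ 3.
Proof. destruct t as [[x y] z]; simpl. ring. Qed.

Definition admissible (t : triple) : Prop :=
  0 <= corrX t <= 1 /\ 0 <= corrY t <= corrZ t /\ corrZ t <= 1.

Definition dominated (s t : triple) : Prop :=
  corrZ s = corrZ t /\ corrX s <= corrX t /\ corrY s <= corrY t.

Lemma B_step_admissible t :
  0 <= corrX t <= 1 -> 0 <= corrY t <= 1 -> corrX t * corrY t <= corrZ t ->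
  admissible (B_step t).
Proof.
  unfold admissible. rewrite corrX_B_step, corrY_B_step, corrZ_B_step.
  set (x := corrX t); set (y := corrY t); set (z := corrZ t).
  intros Hx Hy Hxyz.
  assert (D : 0 < 1 + z ^ 2) by nra.
  assert (0 <= x * y) by nra.
  assert (0 <= (1 - x ^ 2) * (1 - y ^ 2)) by (apply Rmult_le_pos; nra).
  repeat split.
  - apply Rdiv_le_0_compat; nra.
  - apply (Rdiv_le_1 _ _ D). nra.
  - apply Rdiv_le_0_compat; nra.
  - unfold Rdiv. apply Rmult_le_compat_r; [left; apply Rinv_0_lt_compat |]; nra.
  - apply (Rdiv_le_1 _ _ D). pose proof (pow2_ge_0 (z - 1)). nra.
Qed.

Lemma B_step_monotone s t :
  0 <= corrX s -> 0 <= corrY s -> dominated s t -> dominated (B_step s) (B_step t).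
Proof.
  unfold dominated. rewrite !corrX_B_step, !corrY_B_step, !corrZ_B_step.
  intros Hx Hy [-> [Hxx Hyy]].
  assert (D : 0 <= / (1 + corrZ t ^ 2)) by (left; apply Rinv_0_lt_compat; nra).
  unfold Rdiv. repeat split; apply Rmult_le_compat_r; nra.
Qed.

Lemma P_step_admissible t : admissible t -> admissible (P_step t).
Proof.
  unfold admissible. rewrite corrX_P_step, corrY_P_step, corrZ_P_step.
  set (x := corrX t); set (y := corrY t); set (z := corrZ t).
  intros [Hx [Hy Hz]].
  assert (0 <= x * (3 - x ^ 2)) by (apply Rmult_le_pos; nra).
  assert (0 <= (1 - x) ^ 2 * (2 + x)) by (apply Rmult_le_pos; nra).
  assert (0 <= y * (3 * z ^ 2 - y ^ 2)) by (apply Rmult_le_pos; nra).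
  assert (0 <= (z - y) ^ 2 * (2 * z + y)) by (apply Rmult_le_pos; nra).
  repeat split; nra.
Qed.

Lemma P_step_monotone s t :
  admissible s -> admissible t -> dominated s t -> dominated (P_step s) (P_step t).
Proof.
  unfold admissible, dominated. rewrite !corrX_P_step, !corrY_P_step, !corrZ_P_step.
  intros [Hxs [Hys _]] [Hxt [Hyt Hzt]] [Hz [Hxx Hyy]]. rewrite Hz in *.
  split; [reflexivity |].
  assert (0 <= (corrX t - corrX s) * (3 - corrX s ^ 2 - corrX s * corrX t - corrX t ^ 2))
    by (apply Rmult_le_pos; nra).
  assert (0 <= (corrY t - corrY s) *
               (3 * corrZ t ^ 2 - corrY s ^ 2 - corrY s * corrY t - corrY t ^ 2))
    by (apply Rmult_le_pos; nra).
  split; nra.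
Qed.

Lemma apply_step_admissible st t : admissible t -> admissible (apply_step st t).
Proof.
  intros Ht. destruct st; simpl; [| exact (P_step_admissible t Ht)].
  destruct Ht as [Hx [Hy Hz]].
  apply B_step_admissible; [lra | lra | nra].
Qed.

Lemma apply_step_monotone st s t :
  admissible s -> admissible t -> dominated s t ->
  dominated (apply_step st s) (apply_step st t).
Proof.
  intros Hs Ht Hst. destruct st; simpl.
  - destruct Hs as [Hx [Hy _]]. apply B_step_monotone; [lra | lra | exact Hst].
  - exact (P_step_monotone s t Hs Ht Hst).
Qed.

Lemma apply_steps_admissible l : forall t, admissible t -> admissible (apply_steps l t).
Proof.
  induction l as [| st l IH]; intros t Ht; simpl; [exact Ht |].
  apply IH, apply_step_admissible, Ht.
Qed.

Lemma apply_steps_monotone l : forall s t,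
  admissible s -> admissible t -> dominated s t ->
  dominated (apply_steps l s) (apply_steps l t).
Proof.
  induction l as [| st l IH]; intros s t Hs Ht Hst; simpl; [exact Hst |].
  apply IH; [apply apply_step_admissible, Hs | apply apply_step_admissible, Ht |].
  apply apply_step_monotone; assumption.
Qed.

Definition key_rate (t : triple) : R :=
  let '(pX, pY, pZ) := t in 1 - H2 (pX + pY) - H2 (pZ + pY).

Lemma key_rate_corr t :
  key_rate t = 1 - H2 ((1 - corrZ t) / 2) - H2 ((1 - corrX t) / 2).
Proof.
  destruct t as [[x y] z]; simpl.
  replace ((1 - (1 - 2 * (x + y))) / 2) with (x + y) by field.
  replace ((1 - (1 - 2 * (y + z))) / 2) with (z + y) by field.
  reflexivity.
Qed.

Lemma key_rate_monotone s t :
  admissible s -> admissible t -> dominated s t -> key_rate s <= key_rate t.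
Proof.
  intros [Hs _] [Ht _] [Hz [Hx _]].
  rewrite !key_rate_corr, Hz.
  assert (H2 ((1 - corrX t) / 2) <= H2 ((1 - corrX s) / 2)) by (apply H2_monotone; lra).
  lra.
Qed.

Lemma corrX_init eb a : corrX (init_triple eb a) = 1 - 3 * eb.
Proof. simpl. field. Qed.
Lemma corrY_init eb a : corrY (init_triple eb a) = 1 - 5 * eb + 4 * a.
Proof. simpl. field. Qed.
Lemma corrZ_init eb a : corrZ (init_triple eb a) = 1 - 2 * eb.
Proof. simpl. field. Qed.

Lemma B_step_init_admissible eb a :
  0 < eb < 1 / 3 -> eb / 2 <= a <= eb -> admissible (B_step (init_triple eb a)).
Proof.
  intros Heb Ha.
  apply B_step_admissible; rewrite ?corrX_init, ?corrY_init, ?corrZ_init; [lra | lra |].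
  nra.
Qed.

Lemma init_dominated eb a :
  eb / 2 <= a -> dominated (init_triple eb (eb / 2)) (init_triple eb a).
Proof.
  intros Ha. unfold dominated.
  rewrite !corrX_init, !corrY_init, !corrZ_init. lra.
Qed.

Theorem corollary1 :
  forall (eb : R) (l : list step),
    0 < eb < 1 / 3 ->
    (exists l', l = Bst :: l') ->
    forall a : R, eb / 2 <= a <= eb ->
      rate l eb (eb / 2) <= rate l eb a.
Proof.
  intros eb l Heb [l' ->] a Ha.
  assert (Hlow : admissible (B_step (init_triple eb (eb / 2))))
    by (apply B_step_init_admissible; lra).
  assert (Ha' : admissible (B_step (init_triple eb a)))
    by (apply B_step_init_admissible; assumption).
  change (key_rate (apply_steps l' (B_step (init_triple eb (eb / 2))))
          <= key_rate (apply_steps l' (B_step (init_triple eb a)))).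
  apply key_rate_monotone;
    [apply apply_steps_admissible, Hlow | apply apply_steps_admissible, Ha' |].
  apply apply_steps_monotone; [exact Hlow | exact Ha' |].
  apply B_step_monotone; rewrite ?corrX_init, ?corrY_init; [lra | lra |].
  apply init_dominated; lra.
Qed.
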